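(* Let $\mathcal C$ be a category in which finite inverse limits exist. (1) If $P_\bullet$ is a multiplicative oversimplicial object of $\mathcal C$, then $(P_1,P_0,s,t,e,\mu,\iota)$ is a groupoid in $\mathcal C$, where $s,t\colon P_1\to P_0$ are induced by the maps $[0]\to[0,1]$ sending $0$ to $0$ and to $1$ respectively, $e\colon P_0\to P_1$ by the unique map $[0,1]\to[0]$, $\iota\colon P_1\to P_1$ by the map $[0,1]\to[0,1]$ exchanging $0$ and $1$, and $\mu\colon P_1\times_{P_0}P_1\to P_1$ is the composition of the inverse of the isomorphism $P_2\to P_1\times_{P_0}P_1$ (induced by the inclusion $[0,1]\to[0,2]$ and the map $[0,1]\to[0,2]$, $i\mapsto i+1$) with the map $P_2\to P_1$ induced by $[0,1]\to[0,2]$, $0\mapsto 0$, $1\mapsto 2$. (2) The functor from the full subcategory of multiplicative oversimplicial objects of $\mathcal C$ to the category of groupoids in $\mathcal C$ given by the construction in (1) is an equivalence of categories. It induces an equivalence between the full subcategory of strictly multiplicative oversimplicial objects and the full subcategory of groups in $\mathcal C$ (groupoids with $s=t$).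
   Context: Let $\widetilde\Delta$ be the full subcategory of the category of sets whose objects are $[0,n]=\{0,1,\dots,n\}$, $n\ge0$ (all maps of sets allowed). An oversimplicial object of $\mathcal C$ is a contravariant functor $P\colon\widetilde\Delta\to\mathcal C$, $P_n=P([0,n])$. An additive cocartesian diagram is a pushout square in $\widetilde\Delta$ with maps $[0]\to[0,m]$, $[0]\to[0,l]$, $[0,m]\to[0,n]$, $[0,l]\to[0,n]$. $P$ is multiplicative if for every such diagram $P_n\to P_m\times_{P_0}P_l$ is an isomorphism; it is strictly multiplicative if moreover the two morphisms $P_1\to P_0$ (induced by the two maps $[0]\to[0,1]$) are equal. A groupoid in $\mathcal C$ is a 7-tuple $(P,S,s,t,e,\mu,\iota)$ of objects $P,S$ and morphisms $s,t\colon P\to S$, $e\colon S\to P$, $\mu\colon P\times_SP\to P$ (fiber product via $t$ on the first factor and $s$ on the second), $\iota\colon P\to P$, such that $\mu$ is associative, $e$ is a two-sided unit ($\mu\circ((e\circ s)\times\mathrm{id})=\mathrm{id}=\mu\circ(\mathrm{id}\times(e\circ t))$) and $\iota$ is an inverse ($\mu\circ(\mathrm{id}\times\iota)=e\circ s$, $\mu\circ(\iota\times\mathrm{id})=e\circ t$). It is a group if $s=t$. *)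

From mathcomp Require Import all_boot.
From Stdlib Require Import ClassicalEpsilon ProofIrrelevance FunctionalExtensionality.

Set Implicit Arguments.
Unset Strict Implicit.
Unset Printing Implicit Defensive.

Record Category := Cat {
  Ob :> Type;
  Hom : Ob -> Ob -> Type;
  idm : forall A, Hom A A;
  comp : forall A B C, Hom B C -> Hom A B -> Hom A C;
  comp_idl : forall A B (f : Hom A B), comp (idm B) f = f;
  comp_idr : forall A B (f : Hom A B), comp f (idm A) = f;
  comp_assoc : forall A B C D (h : Hom C D) (g : Hom B C) (f : Hom A B),
      comp h (comp g f) = comp (comp h g) f }.

Arguments Hom {_} _ _.
Arguments idm {_} _.
Arguments comp {_ _ _ _} _ _.
Arguments comp_idl {_ _ _} _.
Arguments comp_idr {_ _ _} _.
Arguments comp_assoc {_ _ _ _ _} _ _ _.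

Notation "g ⊙ f" := (comp g f) (at level 40, left associativity).

Definition is_iso (C : Category) (A B : C) (f : Hom A B) : Prop :=
  exists g : Hom B A, g ⊙ f = idm A /\ f ⊙ g = idm B.

Definition iso_inv (C : Category) (A B : C) (f : Hom A B) (h : is_iso f) : Hom B A :=
  proj1_sig (constructive_indefinite_description _ h).

(* A category with (chosen) finite inverse limits: a terminal object and
   fiber products (pullbacks). *)
Record FinLimCategory := FLCat {
  flcat :> Category;
  term : Ob flcat;
  term_map : forall X : Ob flcat, Hom X term;
  term_uniq : forall (X : Ob flcat) (u v : Hom X term), u = v;
  pb : forall X Y Z : Ob flcat, Hom X Z -> Hom Y Z -> Ob flcat;
  pb1 : forall (X Y Z : Ob flcat) (f : Hom X Z) (g : Hom Y Z), Hom (pb f g) X;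
  pb2 : forall (X Y Z : Ob flcat) (f : Hom X Z) (g : Hom Y Z), Hom (pb f g) Y;
  pb_comm : forall (X Y Z : Ob flcat) (f : Hom X Z) (g : Hom Y Z),
      f ⊙ pb1 f g = g ⊙ pb2 f g;
  pb_pair : forall (X Y Z : Ob flcat) (f : Hom X Z) (g : Hom Y Z) (W : Ob flcat)
      (h : Hom W X) (k : Hom W Y), f ⊙ h = g ⊙ k -> Hom W (pb f g);
  pb_pair1 : forall (X Y Z : Ob flcat) (f : Hom X Z) (g : Hom Y Z) (W : Ob flcat)
      (h : Hom W X) (k : Hom W Y) (e : f ⊙ h = g ⊙ k), pb1 f g ⊙ pb_pair e = h;
  pb_pair2 : forall (X Y Z : Ob flcat) (f : Hom X Z) (g : Hom Y Z) (W : Ob flcat)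
      (h : Hom W X) (k : Hom W Y) (e : f ⊙ h = g ⊙ k), pb2 f g ⊙ pb_pair e = k;
  pb_uniq : forall (X Y Z : Ob flcat) (f : Hom X Z) (g : Hom Y Z) (W : Ob flcat)
      (u v : Hom W (pb f g)),
      pb1 f g ⊙ u = pb1 f g ⊙ v -> pb2 f g ⊙ u = pb2 f g ⊙ v -> u = v }.

Arguments term {_}.
Arguments pb {_ _ _ _} _ _.
Arguments pb1 {_ _ _ _} _ _.
Arguments pb2 {_ _ _ _} _ _.
Arguments pb_comm {_ _ _ _} _ _.
Arguments pb_pair {_ _ _ _ _ _ _ _ _} _.
Arguments pb_pair1 {_ _ _ _ _ _ _ _ _} _.
Arguments pb_pair2 {_ _ _ _ _ _ _ _ _} _.
Arguments pb_uniq {_ _ _ _ _ _ _} _ _ _ _.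

Lemma pb_pair_comp (C : FinLimCategory) (X Y Z W V : C) (f : Hom X Z) (g : Hom Y Z)
  (h : Hom W X) (k : Hom W Y) (e : f ⊙ h = g ⊙ k) (m : Hom V W)
  (e' : f ⊙ (h ⊙ m) = g ⊙ (k ⊙ m)) :
  pb_pair e ⊙ m = pb_pair e'.
Proof.
apply: pb_uniq; by rewrite comp_assoc ?pb_pair1 ?pb_pair2.
Qed.

Lemma pb_pair_ext (C : FinLimCategory) (X Y Z W : C) (f : Hom X Z) (g : Hom Y Z)
  (h h' : Hom W X) (k k' : Hom W Y) (e : f ⊙ h = g ⊙ k) (e' : f ⊙ h' = g ⊙ k') :
  h = h' -> k = k' -> pb_pair e = pb_pair e'.
Proof. by move=> Hh Hk; apply: pb_uniq; rewrite ?pb_pair1 ?pb_pair2. Qed.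

(* Oversimplicial objects: contravariant functors on Δ~, the full      *)
(* subcategory of Set on the [0,n] = 'I_n.+1, all maps of sets allowed. *)

Record OS (C : Category) := MkOS {
  os_ob :> nat -> Ob C;
  os_map : forall m n : nat, ('I_m.+1 -> 'I_n.+1) -> Hom (os_ob n) (os_ob m);
  os_id : forall n : nat, os_map (@id 'I_n.+1) = idm (os_ob n);
  os_comp : forall (k m n : nat) (f : 'I_k.+1 -> 'I_m.+1) (g : 'I_m.+1 -> 'I_n.+1),
      os_map (g \o f) = os_map f ⊙ os_map g }.

Arguments os_map {C} _ {m n} _.

(* Pushout squares in Δ~ of the shape [0] -> [0,m], [0] -> [0,l],
   [0,m] -> [0,n], [0,l] -> [0,n] (additive cocartesian diagrams). *)
Definition is_pushout_D (m l n : nat) (a : 'I_1 -> 'I_m.+1) (b : 'I_1 -> 'I_l.+1)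
    (f : 'I_m.+1 -> 'I_n.+1) (g : 'I_l.+1 -> 'I_n.+1) : Prop :=
  f \o a =1 g \o b /\
  forall (k : nat) (u : 'I_m.+1 -> 'I_k.+1) (v : 'I_l.+1 -> 'I_k.+1),
    u \o a =1 v \o b ->
    exists w : 'I_n.+1 -> 'I_k.+1,
      (w \o f =1 u /\ w \o g =1 v) /\
      forall w' : 'I_n.+1 -> 'I_k.+1, w' \o f =1 u -> w' \o g =1 v -> w' =1 w.

Lemma os_square (C : Category) (P : OS C) (m l n : nat) (a : 'I_1 -> 'I_m.+1)
  (b : 'I_1 -> 'I_l.+1) (f : 'I_m.+1 -> 'I_n.+1) (g : 'I_l.+1 -> 'I_n.+1) :
  f \o a =1 g \o b -> os_map P a ⊙ os_map P f = os_map P b ⊙ os_map P g.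
Proof.
move=> H; rewrite -!os_comp; congr (os_map P _); exact: functional_extensionality H.
Qed.

Definition multiplicative (C : FinLimCategory) (P : OS C) : Prop :=
  forall (m l n : nat) (a : 'I_1 -> 'I_m.+1) (b : 'I_1 -> 'I_l.+1)
    (f : 'I_m.+1 -> 'I_n.+1) (g : 'I_l.+1 -> 'I_n.+1) (H : is_pushout_D a b f g),
    is_iso (pb_pair (os_square P (proj1 H))).

Definition s_map : 'I_1 -> 'I_2 := fun _ => ord0.
Definition t_map : 'I_1 -> 'I_2 := fun _ => ord_max.
Definition e_map : 'I_2 -> 'I_1 := fun _ => ord0.
Definition i_map : 'I_2 -> 'I_2 := fun i => rev_ord i.
Definition incl_map : 'I_2 -> 'I_3 := fun i => widen_ord (leqnSn 2) i.
Definition shift_map : 'I_2 -> 'I_3 := fun i => lift ord0 i.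
Definition d_map : 'I_2 -> 'I_3 := fun i => inord (i * 2).

Definition strictly_multiplicative (C : FinLimCategory) (P : OS C) : Prop :=
  multiplicative P /\ os_map P s_map = os_map P t_map.

Lemma sq_pushout : is_pushout_D t_map s_map incl_map shift_map.
Proof.
split; first by move=> i; apply: val_inj.
move=> k u v huv.
exists (fun j : 'I_3 => if (j <= 1)%N then u (inord j) else v (inord j.-1)).
split; first split.
- move=> i /=; have := ltn_ord i; rewrite ltnS => ->.
  by congr u; apply: val_inj; rewrite /= inordK.
- case=> [[|[|i]] Hi] //=.
  + have := huv ord0; rewrite /s_map /t_map /= => H.
    have -> : Ordinal Hi = ord0 by apply: val_inj.
    rewrite -H; congr u; apply: val_inj; by rewrite /= inordK.
  + congr v; apply: val_inj; by rewrite /= inordK.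
- move=> w' h1 h2 [[|[|[|j]]] Hj] //=.
  + have -> : inord 0 = ord0 :> 'I_2 by apply: val_inj; rewrite /= inordK.
    rewrite -(h1 ord0) /=; congr w'; exact: val_inj.
  + have -> : inord 1 = ord_max :> 'I_2 by apply: val_inj; rewrite /= inordK.
    rewrite -(h1 ord_max) /=; congr w'; exact: val_inj.
  + have -> : inord 1 = ord_max :> 'I_2 by apply: val_inj; rewrite /= inordK.
    rewrite -(h2 ord_max) /=; congr w'; exact: val_inj.
Qed.

Record GrpdData (C : FinLimCategory) := MkGD {
  gP : Ob C;
  gS : Ob C;
  gs : Hom gP gS;
  gt : Hom gP gS;
  ge : Hom gS gP;
  gmu : Hom (pb gt gs) gP;
  gi : Hom gP gP }.

Arguments MkGD {C} _ _ _ _ _ _ _.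

(* Besides associativity, unit and inverse laws (stated
   with the pairings (e∘s) x id, id x (e∘t), id x ι, ι x id, μ x id, id x μ
   into the fiber products), we include the source/target compatibilities
   which are needed for those pairings to be defined. *)
Definition is_groupoid (C : FinLimCategory) (G : GrpdData C) : Prop :=
  let s := gs G in let t := gt G in let e := ge G in
  let mu := gmu G in let i := gi G in
  let p1 := pb1 t s in let p2 := pb2 t s in
  let r1 := pb1 (t ⊙ p2) s in let r2 := pb2 (t ⊙ p2) s in
  (s ⊙ e = idm (gS G) /\ t ⊙ e = idm (gS G) /\
   s ⊙ mu = s ⊙ p1 /\ t ⊙ mu = t ⊙ p2 /\
   s ⊙ i = t /\ t ⊙ i = s) /\
  (* associativity: mu ∘ (mu x id) = mu ∘ (id x mu) on (P x_S P) x_S P *)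
  (forall (h1 : t ⊙ (mu ⊙ r1) = s ⊙ r2) (hyz : t ⊙ (p2 ⊙ r1) = s ⊙ r2)
          (h2 : t ⊙ (p1 ⊙ r1) = s ⊙ (mu ⊙ pb_pair hyz)),
      mu ⊙ pb_pair h1 = mu ⊙ pb_pair h2) /\
  (forall h : t ⊙ (e ⊙ s) = s ⊙ idm (gP G), mu ⊙ pb_pair h = idm (gP G)) /\
  (forall h : t ⊙ idm (gP G) = s ⊙ (e ⊙ t), mu ⊙ pb_pair h = idm (gP G)) /\
  (forall h : t ⊙ idm (gP G) = s ⊙ i, mu ⊙ pb_pair h = e ⊙ s) /\
  (forall h : t ⊙ i = s ⊙ idm (gP G), mu ⊙ pb_pair h = e ⊙ t).

Definition is_group (C : FinLimCategory) (G : GrpdData C) : Prop :=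
  is_groupoid G /\ gs G = gt G.

Definition is_gd_hom (C : FinLimCategory) (G G' : GrpdData C)
    (fP : Hom (gP G) (gP G')) (fS : Hom (gS G) (gS G')) : Prop :=
  gs G' ⊙ fP = fS ⊙ gs G /\
  gt G' ⊙ fP = fS ⊙ gt G /\
  ge G' ⊙ fS = fP ⊙ ge G /\
  gi G' ⊙ fP = fP ⊙ gi G /\
  (forall h : gt G' ⊙ (fP ⊙ pb1 (gt G) (gs G)) = gs G' ⊙ (fP ⊙ pb2 (gt G) (gs G)),
      gmu G' ⊙ pb_pair h = fP ⊙ gmu G).

Record GDHom (C : FinLimCategory) (G G' : GrpdData C) := MkGDH {
  hP : Hom (gP G) (gP G');
  hS : Hom (gS G) (gS G');
  hprop : is_gd_hom hP hS }.

Arguments MkGDH {C G G' hP hS} _.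

Lemma gdh_eq (C : FinLimCategory) (G G' : GrpdData C) (u v : GDHom G G') :
  hP u = hP v -> hS u = hS v -> u = v.
Proof.
case: u => a b pu; case: v => a' b' pv /= Ha Hb; subst.
by rewrite (proof_irrelevance _ pu pv).
Qed.

Lemma gd_hom_id (C : FinLimCategory) (G : GrpdData C) :
  is_gd_hom (idm (gP G)) (idm (gS G)).
Proof.
rewrite /is_gd_hom; do 4 (split; first by rewrite comp_idl comp_idr).
move=> h.
have -> : pb_pair h = idm _ by apply: pb_uniq; rewrite ?pb_pair1 ?pb_pair2 !comp_idr comp_idl.
by rewrite comp_idr comp_idl.
Qed.

Lemma gd_hom_comp (C : FinLimCategory) (G1 G2 G3 : GrpdData C)
  (g : GDHom G2 G3) (f : GDHom G1 G2) : is_gd_hom (hP g ⊙ hP f) (hS g ⊙ hS f).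
Proof.
case: g => gP' gS' [gs' [gt' [ge' [gi' gm']]]].
case: f => fP fS [fs [ft [fe [fi fm]]]] /=.
split; first by rewrite comp_assoc gs' -comp_assoc fs comp_assoc.
split; first by rewrite comp_assoc gt' -comp_assoc ft comp_assoc.
split; first by rewrite comp_assoc ge' -comp_assoc fe comp_assoc.
split; first by rewrite comp_assoc gi' -comp_assoc fi comp_assoc.
move=> h.
have H2 : gt G2 ⊙ (fP ⊙ pb1 (gt G1) (gs G1)) = gs G2 ⊙ (fP ⊙ pb2 (gt G1) (gs G1)).
  by rewrite !comp_assoc ft fs -!comp_assoc pb_comm.
have H3 : gt G3 ⊙ (gP' ⊙ pb1 (gt G2) (gs G2)) = gs G3 ⊙ (gP' ⊙ pb2 (gt G2) (gs G2)).
  by rewrite !comp_assoc gt' gs' -!comp_assoc pb_comm.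
have E : pb_pair h = pb_pair H3 ⊙ pb_pair H2.
  apply: pb_uniq.
  - by rewrite pb_pair1 comp_assoc pb_pair1 -!comp_assoc pb_pair1.
  - by rewrite pb_pair2 comp_assoc pb_pair2 -!comp_assoc pb_pair2.
by rewrite E comp_assoc gm' -comp_assoc fm comp_assoc.
Qed.

Record NT (C : Category) (P Q : OS C) := MkNT {
  nt :> forall n : nat, Hom (P n) (Q n);
  nt_nat : forall (m n : nat) (f : 'I_m.+1 -> 'I_n.+1),
      nt m ⊙ os_map P f = os_map Q f ⊙ nt n }.

Arguments MkNT {C P Q nt} _.

Lemma nt_eq (C : Category) (P Q : OS C) (a b : NT P Q) :
  (forall n, a n = b n) -> a = b.
Proof.
case: a => a pa; case: b => b pb' /= H.
have E : a = b by apply: functional_extensionality_dep.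
subst; by rewrite (proof_irrelevance _ pa pb').
Qed.

Lemma nt_id_nat (C : Category) (P : OS C) (m n : nat) (f : 'I_m.+1 -> 'I_n.+1) :
  idm (P m) ⊙ os_map P f = os_map P f ⊙ idm (P n).
Proof. by rewrite comp_idl comp_idr. Qed.

Lemma nt_comp_nat (C : Category) (P Q R : OS C) (b : NT Q R) (a : NT P Q)
  (m n : nat) (f : 'I_m.+1 -> 'I_n.+1) :
  (b m ⊙ a m) ⊙ os_map P f = os_map R f ⊙ (b n ⊙ a n).
Proof. by rewrite -comp_assoc nt_nat comp_assoc nt_nat -comp_assoc. Qed.

Definition OSCat (C : Category) : Category.
Proof.
refine (@Cat (OS C) (@NT C)
  (fun P => MkNT (@nt_id_nat C P))
  (fun P Q R b a => MkNT (nt_comp_nat b a)) _ _ _).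
- by move=> P Q f; apply: nt_eq => n /=; rewrite comp_idl.
- by move=> P Q f; apply: nt_eq => n /=; rewrite comp_idr.
- by move=> P Q R S h g f; apply: nt_eq => n /=; rewrite comp_assoc.
Defined.

Definition GDCat (C : FinLimCategory) : Category.
Proof.
refine (@Cat (GrpdData C) (@GDHom C)
  (fun G => MkGDH (gd_hom_id G))
  (fun G1 G2 G3 g f => MkGDH (gd_hom_comp g f)) _ _ _).
- by move=> G G' f; apply: gdh_eq => /=; rewrite comp_idl.
- by move=> G G' f; apply: gdh_eq => /=; rewrite comp_idr.
- by move=> A B C' D h g f; apply: gdh_eq => /=; rewrite comp_assoc.
Defined.

Definition FullSub (D : Category) (p : D -> Prop) : Category :=
  @Cat {x : D | p x} (fun x y => Hom (proj1_sig x) (proj1_sig y))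
    (fun x => idm (proj1_sig x)) (fun _ _ _ g f => g ⊙ f)
    (fun _ _ f => comp_idl f) (fun _ _ f => comp_idr f)
    (fun _ _ _ _ h g f => comp_assoc h g f).

Definition MultOS (C : FinLimCategory) : Category :=
  FullSub (@multiplicative C : OSCat C -> Prop).
Definition StrictMultOS (C : FinLimCategory) : Category :=
  FullSub (@strictly_multiplicative C : OSCat C -> Prop).
Definition Groupoids (C : FinLimCategory) : Category :=
  FullSub (@is_groupoid C : GDCat C -> Prop).
Definition Groups (C : FinLimCategory) : Category :=
  FullSub (@is_group C : GDCat C -> Prop).

Record Functor (D E : Category) := MkFun {
  fob :> D -> E;
  fhom : forall x y : D, Hom x y -> Hom (fob x) (fob y);
  fhom_id : forall x : D, fhom (idm x) = idm (fob x);
  fhom_comp : forall (x y z : D) (g : Hom y z) (f : Hom x y),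
      fhom (g ⊙ f) = fhom g ⊙ fhom f }.

Arguments fhom {D E} _ {x y} _.

Definition FunId (D : Category) : Functor D D :=
  @MkFun D D (fun x => x) (fun _ _ f => f) (fun _ => erefl) (fun _ _ _ _ _ => erefl).

Definition FunComp (D E F : Category) (G : Functor E F) (H : Functor D E) : Functor D F.
Proof.
refine (@MkFun D F (fun x => G (H x)) (fun _ _ f => fhom G (fhom H f)) _ _).
- by move=> x; rewrite !fhom_id.
- by move=> x y z g f; rewrite !fhom_comp.
Defined.

Definition nat_iso (D E : Category) (F G : Functor D E) : Prop :=
  exists a : forall x : D, Hom (F x) (G x),
    (forall (x y : D) (f : Hom x y), a y ⊙ fhom F f = fhom G f ⊙ a x) /\
    (forall x : D, is_iso (a x)).

Definition is_equivalence (D E : Category) (F : Functor D E) : Prop :=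
  exists G : Functor E D,
    nat_iso (FunId D) (FunComp G F) /\ nat_iso (FunComp F G) (FunId E).

Definition os_phi (C : FinLimCategory) (P : OS C) :
    Hom (P 2) (pb (os_map P t_map) (os_map P s_map)) :=
  pb_pair (os_square P (proj1 sq_pushout)).

Definition constr (C : FinLimCategory) (P : OS C) (hP : multiplicative P) : GrpdData C :=
  MkGD (P 1) (P 0) (os_map P s_map) (os_map P t_map) (os_map P e_map)
    (os_map P d_map ⊙ iso_inv (hP _ _ _ _ _ _ _ sq_pushout))
    (os_map P i_map).

Definition constrM (C : FinLimCategory) (P : MultOS C) : GrpdData C :=
  constr (proj2_sig P).

(* The functor of (2), given the facts that the construction lands in
   groupoids (hG, i.e. part (1)) and that natural transformations give
   groupoid morphisms (hH). *)
Definition Phi (C : FinLimCategory)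
  (hG : forall P : MultOS C, is_groupoid (constrM P))
  (hH : forall (P Q : MultOS C) (a : Hom P Q),
      is_gd_hom (G := constrM P) (G' := constrM Q) (nt a 1) (nt a 0)) :
  Functor (MultOS C) (Groupoids C).
Proof.
refine (@MkFun (MultOS C) (Groupoids C)
  (fun P => exist _ (constrM P) (hG P) : Groupoids C)
  (fun P Q a => MkGDH (hH P Q a)) _ _).
- by move=> P; apply: gdh_eq.
- by move=> P Q R g f; apply: gdh_eq.
Defined.

Definition strict_to_mult (C : FinLimCategory) (P : StrictMultOS C) : MultOS C :=
  exist _ (proj1_sig P) (proj1 (proj2_sig P)).

Lemma constr_group (C : FinLimCategory)
  (hG : forall P : MultOS C, is_groupoid (constrM P)) (P : StrictMultOS C) :
  is_group (constrM (strict_to_mult P)).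
Proof. split; [exact: hG | exact: (proj2 (proj2_sig P))]. Qed.

Definition PhiStrict (C : FinLimCategory)
  (hG : forall P : MultOS C, is_groupoid (constrM P))
  (hH : forall (P Q : MultOS C) (a : Hom P Q),
      is_gd_hom (G := constrM P) (G' := constrM Q) (nt a 1) (nt a 0)) :
  Functor (StrictMultOS C) (Groups C).
Proof.
refine (@MkFun (StrictMultOS C) (Groups C)
  (fun P => exist _ (constrM (strict_to_mult P)) (constr_group hG P) : Groups C)
  (fun P Q a => MkGDH (hH (strict_to_mult P) (strict_to_mult Q) a)) _ _).
- by move=> P; apply: gdh_eq.
- by move=> P Q R g f; apply: gdh_eq.
Defined.

From mathcomp Require Import all_boot.
From Stdlib Require Import ClassicalEpsilon ProofIrrelevance FunctionalExtensionality Classical.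

Set Implicit Arguments.
Unset Strict Implicit.
Unset Printing Implicit Defensive.

(* A multiplicative P is determined by P_1 over P_0: multiplicativity for the
   gluing [0,n] +_{[0]} [0,1] = [0,n+1] identifies P_n with the object of
   n-tuples of arrows of P_1 with a common source, an arrow being read as the
   edge (0,1) of a simplex.  Every groupoid axiom then becomes an identity
   between edges of some P_n, namely edge (a,b) * edge (b,c) = edge (a,c).
   Conversely a groupoid G has a nerve N_n = P x_S ... x_S P whose structure
   maps send a tuple (x_1,...,x_n) (with x_0 the unit) to the tuple of
   x_{f 0}^-1 x_{f j}; it is multiplicative because a pushout square of
   finite sets glues two pieces along a single point.  The comparison maps
   P_n -> N_n (constr P) and N_1 G -> P (arrows of G) are natural
   isomorphisms. *)

Section Isomorphisms.
Variable C : Category.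

Lemma iso_invL (A B : C) (f : Hom A B) (h : is_iso f) : iso_inv h ⊙ f = idm A.
Proof. rewrite /iso_inv; by case: constructive_indefinite_description => g []. Qed.

Lemma iso_invR (A B : C) (f : Hom A B) (h : is_iso f) : f ⊙ iso_inv h = idm B.
Proof. rewrite /iso_inv; by case: constructive_indefinite_description => g []. Qed.

Lemma iso_epi (A B X : C) (f : Hom A B) (u v : Hom B X) :
  is_iso f -> u ⊙ f = v ⊙ f -> u = v.
Proof.
move=> [g [_ fg]] E.
by rewrite -(comp_idr u) -(comp_idr v) -fg !comp_assoc E.
Qed.

Lemma iso_mono (A B X : C) (f : Hom A B) (u v : Hom X A) :
  is_iso f -> f ⊙ u = f ⊙ v -> u = v.
Proof.
move=> [g [gf _]] E.
by rewrite -(comp_idl u) -(comp_idl v) -gf -!comp_assoc E.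
Qed.

Lemma is_iso_idm (A : C) : is_iso (idm A).
Proof. by exists (idm A); rewrite comp_idl. Qed.

Lemma is_iso_comp (A B D : C) (f : Hom A B) (g : Hom B D) :
  is_iso f -> is_iso g -> is_iso (g ⊙ f).
Proof.
move=> [f' [f1 f2]] [g' [g1 g2]]; exists (f' ⊙ g'); split.
  by rewrite -comp_assoc (comp_assoc g') g1 comp_idl.
by rewrite -comp_assoc (comp_assoc f) f2 comp_idl.
Qed.

Lemma comp_eqA (A B D : C) (a : Hom B D) (b : Hom A B) (c : Hom A D) :
  a ⊙ b = c -> forall (Z : C) (z : Hom Z A), a ⊙ (b ⊙ z) = c ⊙ z.
Proof. by move=> <- Z z; rewrite comp_assoc. Qed.

Lemma inv_square (A B A' B' : C) (f : Hom A B) (g : Hom B A)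
  (f' : Hom A' B') (g' : Hom B' A') (x : Hom A A') (y : Hom B B') :
  f ⊙ g = idm B -> g' ⊙ f' = idm A' -> y ⊙ f = f' ⊙ x -> x ⊙ g = g' ⊙ y.
Proof.
move=> fg gf' E.
transitivity (g' ⊙ f' ⊙ x ⊙ g); first by rewrite gf' comp_idl.
by rewrite -(comp_assoc g') -E comp_assoc -(comp_assoc _ f) fg comp_idr.
Qed.

End Isomorphisms.

Section Pullbacks.
Variable C : FinLimCategory.

Lemma pb_pairE (X Y Z W : C) (f : Hom X Z) (g : Hom Y Z) (h : Hom W X)
  (k : Hom W Y) (e : f ⊙ h = g ⊙ k) (u : Hom W (pb f g)) :
  pb1 f g ⊙ u = h -> pb2 f g ⊙ u = k -> u = pb_pair e.
Proof. by move=> uh uk; apply: pb_uniq; rewrite ?pb_pair1 ?pb_pair2. Qed.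

Lemma pb_pair_iso (X X' Y Z : C) (f : Hom X Z) (g : Hom Y Z) (f' : Hom X' Z)
  (phi : Hom X X') (e : f' ⊙ (phi ⊙ pb1 f g) = g ⊙ pb2 f g) :
  is_iso phi -> f' ⊙ phi = f -> is_iso (pb_pair e).
Proof.
move=> [psi [p1 p2]] hf.
have hf' : f ⊙ psi = f' by rewrite -hf -comp_assoc p2 comp_idr.
have e' : f ⊙ (psi ⊙ pb1 f' g) = g ⊙ pb2 f' g by rewrite comp_assoc hf' pb_comm.
exists (pb_pair e'); split; apply: pb_uniq; rewrite ?comp_idr comp_assoc ?pb_pair1 ?pb_pair2.
all: try by rewrite -comp_assoc pb_pair1 comp_assoc ?p1 ?p2 comp_idl.
all: by rewrite ?pb_pair2.
Qed.

End Pullbacks.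

Lemma ord1E (i : 'I_1) : i = ord0.
Proof. by apply: val_inj; case: i => [[|]]. Qed.

Lemma ord2_ind (P : 'I_2 -> Prop) : P ord0 -> P ord_max -> forall i, P i.
Proof.
move=> H0 H1 [[|[|i]] Hi] //.
- by have -> : Ordinal Hi = ord0 by apply: val_inj.
- by have -> : Ordinal Hi = ord_max by apply: val_inj.
Qed.

Ltac ord_cases := case=> [[|[|[|[|?]]]] ?] //=; try (apply: val_inj; rewrite /= ?inordK //).

Definition edge (n : nat) (a b : 'I_n.+1) : 'I_2 -> 'I_n.+1 :=
  fun i => if val i == 0 then a else b.

Definition tri (n : nat) (a b c : 'I_n.+1) : 'I_3 -> 'I_n.+1 :=
  fun i => if val i == 0 then a else if val i == 1 then b else c.

Lemma tri_incl n (a b c : 'I_n.+1) : tri a b c \o incl_map =1 edge a b.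
Proof. by case=> [[|[|?]] ?]. Qed.

Lemma tri_shift n (a b c : 'I_n.+1) : tri a b c \o shift_map =1 edge b c.
Proof. by case=> [[|[|?]] ?]. Qed.

Lemma tri_d n (a b c : 'I_n.+1) : tri a b c \o d_map =1 edge a c.
Proof. case=> [[|[|?]] ?] //=; rewrite /tri /d_map /= inordK //. Qed.

(* [0,n+1] is [0,n] with an edge glued at its vertex [c]. *)
Definition glue_a (n : nat) (c : 'I_n.+1) : 'I_1 -> 'I_n.+1 := fun _ => c.
Definition glue_f (n : nat) : 'I_n.+1 -> 'I_n.+2 := fun i => widen_ord (leqnSn _) i.
Definition glue_g (n : nat) (c : 'I_n.+1) : 'I_2 -> 'I_n.+2 :=
  edge (widen_ord (leqnSn _) c) ord_max.

Lemma glue_pushout (n : nat) (c : 'I_n.+1) :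
  is_pushout_D (glue_a c) s_map (@glue_f n) (glue_g c).
Proof.
split; first by move=> i /=; rewrite /glue_g /edge /=.
move=> k u v huv.
exists (fun j : 'I_n.+2 => if (j < n.+1)%N then u (inord j) else v ord_max).
split; first split.
- move=> i /=; rewrite /glue_f /= ltn_ord.
  by congr u; apply: val_inj; rewrite /= inordK.
- apply: ord2_ind => /=.
  + rewrite /glue_g /edge /= ltn_ord.
    have := huv ord0; rewrite /glue_a /s_map /= => <-.
    by congr u; apply: val_inj; rewrite /= inordK.
  + by rewrite /glue_g /edge /= ltnn.
- move=> w' h1 h2 j /=.
  case: ifP => hj.
  + rewrite -(h1 (inord j)) /=; congr w'; apply: val_inj; by rewrite /= inordK.
  + rewrite -(h2 ord_max) /glue_g /edge /=; congr w'; apply: val_inj => /=.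
    by apply/eqP; rewrite eqn_leq -ltnS ltn_ord leqNgt hj.
Qed.

Section Oversimplicial.
Variables (C : Category) (P : OS C).

Lemma os_map_ext (m n : nat) (f g : 'I_m.+1 -> 'I_n.+1) :
  f =1 g -> os_map P f = os_map P g.
Proof. by move=> H; rewrite (functional_extensionality _ _ H). Qed.

Lemma os_map_compE (k m n : nat) (f : 'I_k.+1 -> 'I_m.+1)
  (g : 'I_m.+1 -> 'I_n.+1) (h : 'I_k.+1 -> 'I_n.+1) :
  g \o f =1 h -> os_map P f ⊙ os_map P g = os_map P h.
Proof. by move=> H; rewrite -os_comp; apply: os_map_ext. Qed.

Lemma os_map_idE (n : nat) (f : 'I_n.+1 -> 'I_n.+1) :
  f =1 id -> os_map P f = idm (P n).
Proof. by move=> H; rewrite (os_map_ext H) os_id. Qed.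

Lemma os_map_retraction (m n : nat) (f : 'I_m.+1 -> 'I_n.+1) (g : 'I_n.+1 -> 'I_m.+1) :
  g \o f =1 id -> os_map P f ⊙ os_map P g = idm (P m).
Proof. by move=> H; rewrite (os_map_compE H) os_id. Qed.

Lemma edge_square n (a b c : 'I_n.+1) :
  os_map P t_map ⊙ os_map P (edge a b) = os_map P s_map ⊙ os_map P (edge b c).
Proof. by rewrite -!os_comp; apply: os_map_ext. Qed.

End Oversimplicial.

(** * The groupoid of a multiplicative oversimplicial object *)

Section Construction.
Variables (C : FinLimCategory) (P : OS C) (hP : multiplicative P).

Local Notation s := (os_map P s_map).
Local Notation t := (os_map P t_map).

Definition os_phi_iso : is_iso (os_phi P) := hP sq_pushout.

Definition os_phi_inv := iso_inv os_phi_iso.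

Lemma os_phi_invL : os_phi_inv ⊙ os_phi P = idm (P 2).
Proof. exact: iso_invL. Qed.

Lemma os_phi_invR : os_phi P ⊙ os_phi_inv = idm (pb t s).
Proof. exact: iso_invR. Qed.

Lemma constr_muE : gmu (constr hP) = os_map P d_map ⊙ os_phi_inv.
Proof. by []. Qed.

Lemma pb1_os_phi : pb1 t s ⊙ os_phi P = os_map P incl_map.
Proof. exact: pb_pair1. Qed.

Lemma pb2_os_phi : pb2 t s ⊙ os_phi P = os_map P shift_map.
Proof. exact: pb_pair2. Qed.

Lemma constr_mu_edges n (a b c : 'I_n.+1) (X : Hom (P n) (pb t s)) :
  pb1 t s ⊙ X = os_map P (edge a b) -> pb2 t s ⊙ X = os_map P (edge b c) ->
  gmu (constr hP) ⊙ X = os_map P (edge a c).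
Proof.
move=> X1 X2.
have -> : X = os_phi P ⊙ os_map P (tri a b c).
  apply: pb_uniq; rewrite comp_assoc ?pb1_os_phi ?pb2_os_phi ?X1 ?X2.
  - by symmetry; apply: os_map_compE; apply: tri_incl.
  - by symmetry; apply: os_map_compE; apply: tri_shift.
rewrite constr_muE -comp_assoc (comp_assoc os_phi_inv) os_phi_invL comp_idl.
by apply: os_map_compE; apply: tri_d.
Qed.

Lemma constr_mu_edgesA n (a b c : 'I_n.+1) (Y : C) (X : Hom (P n) Y) (Z : Hom Y (pb t s)) :
  pb1 t s ⊙ (Z ⊙ X) = os_map P (edge a b) -> pb2 t s ⊙ (Z ⊙ X) = os_map P (edge b c) ->
  gmu (constr hP) ⊙ Z ⊙ X = os_map P (edge a c).
Proof. by move=> H1 H2; rewrite -comp_assoc (constr_mu_edges H1 H2). Qed.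

Lemma constr_src_tgt :
  let G := constr hP in
  gs G ⊙ ge G = idm (gS G) /\ gt G ⊙ ge G = idm (gS G) /\
  gs G ⊙ gmu G = gs G ⊙ pb1 (gt G) (gs G) /\ gt G ⊙ gmu G = gt G ⊙ pb2 (gt G) (gs G) /\
  gs G ⊙ gi G = gt G /\ gt G ⊙ gi G = gs G.
Proof.
split; first by apply: os_map_retraction => i; rewrite [i]ord1E.
split; first by apply: os_map_retraction => i; rewrite [i]ord1E.
split.
  rewrite constr_muE /= comp_assoc (@os_map_compE _ P _ _ _ _ _ (incl_map \o s_map)); last by ord_cases.
  by rewrite os_comp -pb1_os_phi -!comp_assoc os_phi_invR comp_idr.
split.
  rewrite constr_muE /= comp_assoc (@os_map_compE _ P _ _ _ _ _ (shift_map \o t_map)); last by ord_cases.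
  by rewrite os_comp -pb2_os_phi -!comp_assoc os_phi_invR comp_idr.
by split; apply: os_map_compE; ord_cases.
Qed.

Lemma constr_unitl (h : t ⊙ (os_map P e_map ⊙ s) = s ⊙ idm (P 1)) :
  gmu (constr hP) ⊙ pb_pair h = idm (P 1).
Proof.
rewrite (constr_mu_edges (a := ord0) (b := ord0) (c := ord_max)).
- by apply: os_map_idE; ord_cases.
- by rewrite pb_pair1 -os_comp; apply: os_map_ext; ord_cases.
- by rewrite pb_pair2; symmetry; apply: os_map_idE; ord_cases.
Qed.

Lemma constr_unitr (h : t ⊙ idm (P 1) = s ⊙ (os_map P e_map ⊙ t)) :
  gmu (constr hP) ⊙ pb_pair h = idm (P 1).
Proof.
rewrite (constr_mu_edges (a := ord0) (b := ord_max) (c := ord_max)).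
- by apply: os_map_idE; ord_cases.
- by rewrite pb_pair1; symmetry; apply: os_map_idE; ord_cases.
- by rewrite pb_pair2 -os_comp; apply: os_map_ext; ord_cases.
Qed.

Lemma constr_invr (h : t ⊙ idm (P 1) = s ⊙ os_map P i_map) :
  gmu (constr hP) ⊙ pb_pair h = os_map P e_map ⊙ s.
Proof.
rewrite (constr_mu_edges (a := ord0) (b := ord_max) (c := ord0)).
- by rewrite -os_comp; apply: os_map_ext; ord_cases.
- by rewrite pb_pair1; symmetry; apply: os_map_idE; ord_cases.
- by rewrite pb_pair2; apply: os_map_ext; ord_cases.
Qed.

Lemma constr_invl (h : t ⊙ os_map P i_map = s ⊙ idm (P 1)) :
  gmu (constr hP) ⊙ pb_pair h = os_map P e_map ⊙ t.
Proof.
rewrite (constr_mu_edges (a := ord_max) (b := ord0) (c := ord_max)).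
- by rewrite -os_comp; apply: os_map_ext; ord_cases.
- by rewrite pb_pair1; apply: os_map_ext; ord_cases.
- by rewrite pb_pair2; symmetry; apply: os_map_idE; ord_cases.
Qed.

Local Notation p1 := (pb1 t s).
Local Notation p2 := (pb2 t s).
Local Notation r1 := (pb1 (t ⊙ p2) s).
Local Notation r2 := (pb2 (t ⊙ p2) s).

Lemma triple_pb_retract :
  exists (psi : Hom (P 3) (pb (t ⊙ p2) s)) (rho : Hom (pb (t ⊙ p2) s) (P 3)),
    [/\ psi ⊙ rho = idm _,
        p1 ⊙ (r1 ⊙ psi) = os_map P (edge ord0 (inord 1)),
        p2 ⊙ (r1 ⊙ psi) = os_map P (edge (inord 1) (inord 2)) &
        r2 ⊙ psi = os_map P (edge (inord 2) ord_max)].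
Proof.
have H3 := glue_pushout (ord_max : 'I_3).
have MI : is_iso (pb_pair (os_square P (proj1 H3))) := hP H3.
set M := pb_pair _ in MI.
have hr : os_map P (glue_a (ord_max : 'I_3)) ⊙ (os_phi_inv ⊙ r1) = s ⊙ r2.
  rewrite -pb_comm -(@os_map_compE _ P _ _ _ t_map shift_map (glue_a (ord_max : 'I_3)));
    last by ord_cases.
  by rewrite -pb2_os_phi -!comp_assoc (comp_assoc (os_phi P)) os_phi_invR comp_idl.
have hpsi : (t ⊙ p2) ⊙ (os_phi P ⊙ os_map P (@glue_f 2))
            = s ⊙ os_map P (glue_g (ord_max : 'I_3)).
  by rewrite -!comp_assoc (comp_assoc _ (os_phi P)) pb2_os_phi -!os_comp;
    apply: os_map_ext; ord_cases.
exists (pb_pair hpsi), (iso_inv MI ⊙ pb_pair hr); split.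
- apply: pb_uniq; rewrite comp_idr comp_assoc ?pb_pair1 ?pb_pair2.
  + have -> : os_map P (@glue_f 2) = pb1 _ _ ⊙ M by rewrite /M pb_pair1.
    rewrite -!comp_assoc (comp_eqA (iso_invR MI)) comp_idl pb_pair1.
    by rewrite (comp_eqA os_phi_invR) comp_idl.
  + have -> : os_map P (glue_g (ord_max : 'I_3)) = pb2 _ _ ⊙ M by rewrite /M pb_pair2.
    by rewrite -!comp_assoc (comp_eqA (iso_invR MI)) comp_idl pb_pair2.
- by rewrite pb_pair1 comp_assoc pb1_os_phi -os_comp; apply: os_map_ext; ord_cases.
- by rewrite pb_pair1 comp_assoc pb2_os_phi -os_comp; apply: os_map_ext; ord_cases.
- by rewrite pb_pair2; apply: os_map_ext; rewrite /glue_g /edge; ord_cases.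
Qed.

Lemma constr_assoc (h1 : t ⊙ (gmu (constr hP) ⊙ r1) = s ⊙ r2)
  (hyz : t ⊙ (p2 ⊙ r1) = s ⊙ r2)
  (h2 : t ⊙ (p1 ⊙ r1) = s ⊙ (gmu (constr hP) ⊙ pb_pair hyz)) :
  gmu (constr hP) ⊙ pb_pair h1 = gmu (constr hP) ⊙ pb_pair h2.
Proof.
have [psi [rho [psirho E01 E12 E23]]] := triple_pb_retract.
rewrite -(comp_idr (_ ⊙ pb_pair h1)) -(comp_idr (_ ⊙ pb_pair h2)) -psirho !comp_assoc.
congr (_ ⊙ rho).
have E02 := constr_mu_edges E01 E12.
have E13 : gmu (constr hP) ⊙ (pb_pair hyz ⊙ psi) = os_map P (edge (inord 1) ord_max).
  apply: (constr_mu_edges (b := inord 2)); rewrite comp_assoc.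
  - by rewrite pb_pair1 -comp_assoc E12.
  - by rewrite pb_pair2 E23.
have L : gmu (constr hP) ⊙ pb_pair h1 ⊙ psi = os_map P (edge ord0 ord_max).
  apply: (constr_mu_edgesA (b := inord 2)); rewrite comp_assoc.
  - by rewrite pb_pair1 -comp_assoc E02.
  - by rewrite pb_pair2 E23.
have R : gmu (constr hP) ⊙ pb_pair h2 ⊙ psi = os_map P (edge ord0 ord_max).
  apply: (constr_mu_edgesA (b := inord 1)); rewrite comp_assoc.
  - by rewrite pb_pair1 -comp_assoc E01.
  - by rewrite pb_pair2 -comp_assoc E13.
by rewrite L R.
Qed.

Lemma constr_groupoid : is_groupoid (constr hP).
Proof.
split; first exact: constr_src_tgt.
split; first exact: constr_assoc.
split; first exact: constr_unitl.
split; first exact: constr_unitr.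
split; [exact: constr_invr | exact: constr_invl].
Qed.

End Construction.

(** * Calculus of generalized elements of a groupoid *)

Section GroupoidCalculus.
Variables (C : FinLimCategory) (G : GrpdData C).

Local Notation s := (gs G).
Local Notation t := (gt G).
Local Notation e := (ge G).
Local Notation i := (gi G).

(* The composite x y of generalized elements; it is junk ([x]) unless
   [t ⊙ x = s ⊙ y]. *)
Definition gmul (W : C) (x y : Hom W (gP G)) : Hom W (gP G) :=
  match excluded_middle_informative (t ⊙ x = s ⊙ y) with
  | left h => gmu G ⊙ pb_pair h
  | right _ => x end.

Definition gdiv (W : C) (x y : Hom W (gP G)) : Hom W (gP G) := gmul (i ⊙ x) y.

Lemma gmulE (W : C) (x y : Hom W (gP G)) (h : t ⊙ x = s ⊙ y) :
  gmul x y = gmu G ⊙ pb_pair h.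
Proof.
rewrite /gmul; case: excluded_middle_informative => [h'|//].
by rewrite (proof_irrelevance _ h h').
Qed.

Lemma gmu_gmul (W : C) (X : Hom W (pb t s)) :
  gmu G ⊙ X = gmul (pb1 t s ⊙ X) (pb2 t s ⊙ X).
Proof.
have h : t ⊙ (pb1 t s ⊙ X) = s ⊙ (pb2 t s ⊙ X) by rewrite !comp_assoc pb_comm.
by rewrite (gmulE h); congr (_ ⊙ _); apply: pb_pairE.
Qed.

Lemma gmul_comp (W V : C) (x y : Hom W (gP G)) (m : Hom V W) :
  t ⊙ x = s ⊙ y -> gmul x y ⊙ m = gmul (x ⊙ m) (y ⊙ m).
Proof.
move=> h; have h' : t ⊙ (x ⊙ m) = s ⊙ (y ⊙ m) by rewrite !comp_assoc h.
by rewrite (gmulE h) (gmulE h') -comp_assoc (pb_pair_comp h h').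
Qed.

Hypothesis hG : is_groupoid G.

Let src_tgt := proj1 hG.
Let assoc := proj1 (proj2 hG).
Let units := proj2 (proj2 hG).

Lemma gs_ge (W : C) (o : Hom W (gS G)) : s ⊙ (e ⊙ o) = o.
Proof. by rewrite comp_assoc (proj1 src_tgt) comp_idl. Qed.

Lemma gt_ge (W : C) (o : Hom W (gS G)) : t ⊙ (e ⊙ o) = o.
Proof. by rewrite comp_assoc (proj1 (proj2 src_tgt)) comp_idl. Qed.

Lemma gs_gi (W : C) (x : Hom W (gP G)) : s ⊙ (i ⊙ x) = t ⊙ x.
Proof. by case: src_tgt => _ [_ [_ [_ [si _]]]]; rewrite comp_assoc si. Qed.

Lemma gt_gi (W : C) (x : Hom W (gP G)) : t ⊙ (i ⊙ x) = s ⊙ x.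
Proof. by case: src_tgt => _ [_ [_ [_ [_ ti]]]]; rewrite comp_assoc ti. Qed.

Lemma gs_gmul (W : C) (x y : Hom W (gP G)) : t ⊙ x = s ⊙ y -> s ⊙ gmul x y = s ⊙ x.
Proof.
case: src_tgt => _ [_ [smu _]] h.
by rewrite (gmulE h) comp_assoc smu -comp_assoc pb_pair1.
Qed.

Lemma gt_gmul (W : C) (x y : Hom W (gP G)) : t ⊙ x = s ⊙ y -> t ⊙ gmul x y = t ⊙ y.
Proof.
case: src_tgt => _ [_ [_ [tmu _]]] h.
by rewrite (gmulE h) comp_assoc tmu -comp_assoc pb_pair2.
Qed.

Lemma gmul1x (W : C) (x : Hom W (gP G)) : gmul (e ⊙ (s ⊙ x)) x = x.
Proof.
have h : t ⊙ (e ⊙ s) = s ⊙ idm (gP G) by rewrite gt_ge comp_idr.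
rewrite -{3}(comp_idl x) -(proj1 units h) -(gmulE h) gmul_comp //.
by rewrite comp_idl comp_assoc.
Qed.

Lemma gmulx1 (W : C) (x : Hom W (gP G)) : gmul x (e ⊙ (t ⊙ x)) = x.
Proof.
have h : t ⊙ idm (gP G) = s ⊙ (e ⊙ t) by rewrite gs_ge comp_idr.
rewrite -{3}(comp_idl x) -(proj1 (proj2 units) h) -(gmulE h) gmul_comp //.
by rewrite comp_idl comp_assoc.
Qed.

Lemma gmulxV (W : C) (x : Hom W (gP G)) : gmul x (i ⊙ x) = e ⊙ (s ⊙ x).
Proof.
have h : t ⊙ idm (gP G) = s ⊙ i by rewrite comp_idr; case: src_tgt => _ [_ [_ [_ [-> _]]]].
by rewrite comp_assoc -(proj1 (proj2 (proj2 units)) h) -(gmulE h) gmul_comp // comp_idl.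
Qed.

Lemma gmulVx (W : C) (x : Hom W (gP G)) : gmul (i ⊙ x) x = e ⊙ (t ⊙ x).
Proof.
have h : t ⊙ i = s ⊙ idm (gP G) by rewrite comp_idr; case: src_tgt => _ [_ [_ [_ [_ ->]]]].
by rewrite comp_assoc -(proj2 (proj2 (proj2 units)) h) -(gmulE h) gmul_comp // comp_idl.
Qed.

Lemma gmulA (W : C) (x y z : Hom W (gP G)) :
  t ⊙ x = s ⊙ y -> t ⊙ y = s ⊙ z -> gmul (gmul x y) z = gmul x (gmul y z).
Proof.
move=> hxy hyz.
have [_ [_ [smu [tmu _]]]] := src_tgt.
set p1 := pb1 t s; set p2 := pb2 t s.
set r1 := pb1 (t ⊙ p2) s; set r2 := pb2 (t ⊙ p2) s.
have h23 : t ⊙ (p2 ⊙ r1) = s ⊙ r2 by rewrite comp_assoc pb_comm.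
have h1 : t ⊙ (gmu G ⊙ r1) = s ⊙ r2 by rewrite comp_assoc tmu -comp_assoc h23.
have h2 : t ⊙ (p1 ⊙ r1) = s ⊙ (gmu G ⊙ pb_pair h23).
  by rewrite !comp_assoc smu -!comp_assoc pb_pair1 !comp_assoc pb_comm.
have hw : (t ⊙ p2) ⊙ pb_pair hxy = s ⊙ z by rewrite -comp_assoc pb_pair2.
have w1 : r1 ⊙ pb_pair hw = pb_pair hxy := pb_pair1 hw.
have w2 : r2 ⊙ pb_pair hw = z := pb_pair2 hw.
have L : gmu G ⊙ pb_pair h1 ⊙ pb_pair hw = gmul (gmul x y) z.
  rewrite -comp_assoc gmu_gmul !comp_assoc pb_pair1 pb_pair2 -comp_assoc w1 w2.
  by rewrite (gmulE hxy).
have R : gmu G ⊙ pb_pair h2 ⊙ pb_pair hw = gmul x (gmul y z).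
  rewrite -comp_assoc gmu_gmul !comp_assoc pb_pair1 pb_pair2 -!comp_assoc w1.
  by rewrite gmu_gmul !comp_assoc !pb_pair1 !pb_pair2 -!comp_assoc w1 pb_pair2.
by rewrite -L -R (assoc h1 h2).
Qed.

Ltac gsimpl := rewrite ?gs_ge ?gt_ge ?gs_gi ?gt_gi.

Lemma gi_unique (W : C) (x y : Hom W (gP G)) :
  t ⊙ x = s ⊙ y -> gmul x y = e ⊙ (s ⊙ x) -> y = i ⊙ x.
Proof.
move=> hxy E.
rewrite -(gmul1x y) -hxy -(gmulVx x) gmulA //; last by gsimpl.
by rewrite E -(gt_gi x) gmulx1.
Qed.

Lemma giK (W : C) (x : Hom W (gP G)) : i ⊙ (i ⊙ x) = x.
Proof. by symmetry; apply: gi_unique; gsimpl; rewrite ?gmulVx; gsimpl. Qed.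

Lemma gi_ge (W : C) (o : Hom W (gS G)) : i ⊙ (e ⊙ o) = e ⊙ o.
Proof.
symmetry; apply: gi_unique; gsimpl => //.
by rewrite -{1}(gs_ge o) gmul1x.
Qed.

Lemma gi_gmul (W : C) (x y : Hom W (gP G)) :
  t ⊙ x = s ⊙ y -> i ⊙ gmul x y = gmul (i ⊙ y) (i ⊙ x).
Proof.
move=> hxy; symmetry; apply: gi_unique.
  by rewrite gt_gmul // gs_gmul; gsimpl => //; rewrite hxy.
have h1 : t ⊙ y = s ⊙ (i ⊙ y) by gsimpl.
have h2 : t ⊙ (i ⊙ y) = s ⊙ (i ⊙ x) by gsimpl; rewrite hxy.
have E1 : gmul y (gmul (i ⊙ y) (i ⊙ x)) = i ⊙ x.
  by rewrite -(gmulA h1 h2) gmulxV -hxy -(gs_gi x) gmul1x.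
by rewrite (gmulA hxy) ?E1 ?gmulxV // gs_gmul.
Qed.

Lemma gdiv_composable (W : C) (x y : Hom W (gP G)) :
  s ⊙ x = s ⊙ y -> t ⊙ (i ⊙ x) = s ⊙ y.
Proof. by move=> hxy; gsimpl. Qed.

Lemma gs_gdiv (W : C) (x y : Hom W (gP G)) : s ⊙ x = s ⊙ y -> s ⊙ gdiv x y = t ⊙ x.
Proof. by move=> hxy; rewrite (gs_gmul (gdiv_composable hxy)); gsimpl. Qed.

Lemma gdiv_comp (W V : C) (x y : Hom W (gP G)) (m : Hom V W) :
  s ⊙ x = s ⊙ y -> gdiv x y ⊙ m = gdiv (x ⊙ m) (y ⊙ m).
Proof. by move=> hxy; rewrite /gdiv (gmul_comp _ (gdiv_composable hxy)) comp_assoc. Qed.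

Lemma gdivxx (W : C) (x : Hom W (gP G)) : gdiv x x = e ⊙ (t ⊙ x).
Proof. exact: gmulVx. Qed.

Lemma gdiv1x (W : C) (o : Hom W (gS G)) (x : Hom W (gP G)) :
  s ⊙ x = o -> gdiv (e ⊙ o) x = x.
Proof. by move=> <-; rewrite /gdiv gi_ge gmul1x. Qed.

Lemma gmul_gdivK (W : C) (x y : Hom W (gP G)) : s ⊙ x = s ⊙ y -> gmul x (gdiv x y) = y.
Proof.
move=> hxy.
have h1 : t ⊙ x = s ⊙ (i ⊙ x) by gsimpl.
by rewrite /gdiv -(gmulA h1 (gdiv_composable hxy)) gmulxV hxy gmul1x.
Qed.

Lemma gmul_gdiv (W : C) (x y z : Hom W (gP G)) :
  s ⊙ x = s ⊙ y -> s ⊙ x = s ⊙ z -> gmul (gdiv x y) (gdiv y z) = gdiv x z.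
Proof.
move=> hxy hxz.
have hyz : s ⊙ y = s ⊙ z by rewrite -hxy.
rewrite {1}/gdiv (gmulA (gdiv_composable hxy)); last by rewrite gs_gdiv.
by rewrite gmul_gdivK.
Qed.

Lemma gdiv_gdiv (W : C) (x y z : Hom W (gP G)) :
  s ⊙ x = s ⊙ y -> s ⊙ x = s ⊙ z -> gdiv (gdiv x y) (gdiv x z) = gdiv y z.
Proof.
move=> hxy hxz.
have hyx : t ⊙ (i ⊙ y) = s ⊙ x by gsimpl.
rewrite {1}/gdiv (gi_gmul (gdiv_composable hxy)) giK (gmulA hyx); last by rewrite gs_gdiv.
by rewrite gmul_gdivK.
Qed.

End GroupoidCalculus.

(** * The nerve of a groupoid *)

Section Nerve.
Variables (C : FinLimCategory) (G : GrpdData C).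

Local Notation s := (gs G).
Local Notation t := (gt G).
Local Notation e := (ge G).
Local Notation i := (gi G).

(* N_n = P x_S ... x_S P (n factors, all fibered over the source), together
   with its map to S. *)
Fixpoint nerve_data (n : nat) : {X : Ob C & Hom X (gS G)} :=
  match n with
  | 0 => existT (fun X => Hom X (gS G)) (gS G) (idm (gS G))
  | n'.+1 => existT (fun X => Hom X (gS G)) (pb (projT2 (nerve_data n')) s)
                 (projT2 (nerve_data n') ⊙ pb1 (projT2 (nerve_data n')) s)
  end.

Definition nerve_ob (n : nat) : Ob C := projT1 (nerve_data n).

Definition nerve_base (n : nat) : Hom (nerve_ob n) (gS G) := projT2 (nerve_data n).

(* The j-th factor of N_n for 0 < j <= n; the 0-th one is the unit. *)
Fixpoint nerve_arr (n : nat) : nat -> Hom (nerve_ob n) (gP G) :=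
  match n with
  | 0 => fun _ => e
  | n'.+1 => fun j => if j == n'.+1 then pb2 (nerve_base n') s
                      else nerve_arr n' j ⊙ pb1 (nerve_base n') s
  end.

Definition nerve_edge n (a b : nat) : Hom (nerve_ob n) (gP G) :=
  gdiv (nerve_arr n a) (nerve_arr n b).

Lemma nerve_arr0 n : nerve_arr n 0 = e ⊙ nerve_base n.
Proof.
elim: n => [|n IH] /=; first by rewrite /nerve_base /= comp_idr.
by rewrite IH -comp_assoc.
Qed.

Lemma nerve_hom_ext_arr n (W : C) (u v : Hom W (nerve_ob n)) :
  nerve_base n ⊙ u = nerve_base n ⊙ v ->
  (forall j, 0 < j <= n -> nerve_arr n j ⊙ u = nerve_arr n j ⊙ v) -> u = v.
Proof.
elim: n u v => [|n IH] u v Hb Ha.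
  by move: Hb; rewrite /nerve_base /= !comp_idl.
apply: pb_uniq.
- apply: IH.
  + by move: Hb; rewrite /nerve_base /= -!comp_assoc.
  + move=> j /andP [j0 jn]; have := Ha j; rewrite /= ifN_eq; last by rewrite neq_ltn ltnS jn.
    by rewrite -!comp_assoc => ->//; rewrite j0 /= ltnW.
- by have := Ha n.+1; rewrite /= eqxx => ->.
Qed.

Lemma nerve_tuple_ex n (W : C) (o : Hom W (gS G)) (y : nat -> Hom W (gP G)) :
  (forall j, s ⊙ y j = o) ->
  {u : Hom W (nerve_ob n) |
    nerve_base n ⊙ u = o /\ forall j, 0 < j <= n -> nerve_arr n j ⊙ u = y j}.
Proof.
move=> Hy; elim: n => [|n [u [Hb Ha]]].
  by exists o; split => [|[|j]] //; rewrite /nerve_base /= comp_idl.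
have h : nerve_base n ⊙ u = s ⊙ y n.+1 by rewrite Hb Hy.
exists (pb_pair h); split.
  by rewrite /nerve_base /= -comp_assoc pb_pair1.
move=> j /andP [j0 jn] /=; case: eqP => [->|ne]; first by rewrite pb_pair2.
rewrite -comp_assoc pb_pair1 Ha // j0 /= -ltnS ltn_neqAle jn andbT.
by apply/eqP.
Qed.

Definition nerve_tuple n (W : C) (o : Hom W (gS G)) (y : nat -> Hom W (gP G))
  (h : forall j, s ⊙ y j = o) : Hom W (nerve_ob n) :=
  proj1_sig (nerve_tuple_ex n h).

Lemma nerve_base_tuple n (W : C) (o : Hom W (gS G)) (y : nat -> Hom W (gP G))
  (h : forall j, s ⊙ y j = o) : nerve_base n ⊙ nerve_tuple n h = o.
Proof. exact: (proj1 (proj2_sig (nerve_tuple_ex n h))). Qed.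

Lemma nerve_arr_tuple n (W : C) (o : Hom W (gS G)) (y : nat -> Hom W (gP G))
  (h : forall j, s ⊙ y j = o) j :
  0 < j <= n -> nerve_arr n j ⊙ nerve_tuple n h = y j.
Proof. exact: (proj2 (proj2_sig (nerve_tuple_ex n h)) j). Qed.

Hypothesis hG : is_groupoid G.

Lemma gs_nerve_arr n j : s ⊙ nerve_arr n j = nerve_base n.
Proof.
elim: n j => [|n IH] j /=; first exact: (proj1 (proj1 hG)).
case: eqP => _; first by rewrite -pb_comm.
by rewrite comp_assoc IH.
Qed.

Lemma gs_nerve_arrs n a b : s ⊙ nerve_arr n a = s ⊙ nerve_arr n b.
Proof. by rewrite !gs_nerve_arr. Qed.

Lemma gs_nerve_edge n a b : s ⊙ nerve_edge n a b = t ⊙ nerve_arr n a.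
Proof. exact: (gs_gdiv hG (gs_nerve_arrs n a b)). Qed.

Lemma nerve_edge0 n b : nerve_edge n 0 b = nerve_arr n b.
Proof. by rewrite /nerve_edge nerve_arr0 (gdiv1x hG) ?gs_nerve_arr. Qed.

Lemma nerve_edge_comp n a b (W : C) (u : Hom W (nerve_ob n)) :
  nerve_edge n a b ⊙ u = gdiv (nerve_arr n a ⊙ u) (nerve_arr n b ⊙ u).
Proof. exact: (gdiv_comp hG _ (gs_nerve_arrs n a b)). Qed.

Lemma gdiv_nerve_edge n (W : C) (u : Hom W (nerve_ob n)) a j k :
  gdiv (nerve_edge n a j ⊙ u) (nerve_edge n a k ⊙ u) = nerve_edge n j k ⊙ u.
Proof.
by rewrite !nerve_edge_comp (gdiv_gdiv hG) // !comp_assoc !gs_nerve_arr.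
Qed.

Lemma nerve_hom_ext n (W : C) (u v : Hom W (nerve_ob n)) :
  (forall j k : 'I_n.+1, nerve_edge n j k ⊙ u = nerve_edge n j k ⊙ v) -> u = v.
Proof.
move=> H; apply: nerve_hom_ext_arr.
  have := H ord0 ord0; rewrite /= nerve_edge0 -(gs_nerve_arr n 0) -!comp_assoc => ->//.
move=> j /andP [_ jn]; have := H ord0 (@Ordinal n.+1 j jn); by rewrite /= nerve_edge0.
Qed.

Lemma nerve_tuple_edges n (W : C) (o : Hom W (gS G)) (r : 'I_n.+1 -> Hom W (gP G)) :
  (forall z, s ⊙ r z = o) ->
  {w : Hom W (nerve_ob n) | forall z z' : 'I_n.+1, nerve_edge n z z' ⊙ w = gdiv (r z) (r z')}.
Proof.
move=> hr.
have h : forall j, s ⊙ gdiv (r ord0) (r (inord j)) = t ⊙ r ord0.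
  by move=> j; rewrite (gs_gdiv hG) // !hr.
exists (nerve_tuple n h) => z z'.
have HA : forall j : 'I_n.+1, nerve_arr n j ⊙ nerve_tuple n h = gdiv (r ord0) (r j).
  move=> j; case: (posnP j) => j0.
    have -> : j = ord0 by apply: val_inj.
    by rewrite nerve_arr0 -comp_assoc nerve_base_tuple (gdivxx hG).
  rewrite nerve_arr_tuple; last by rewrite j0 -ltnS ltn_ord.
  by congr (gdiv _ (r _)); apply: val_inj; rewrite /= inordK.
by rewrite nerve_edge_comp !HA (gdiv_gdiv hG) // !hr.
Qed.

Definition nerve_map m n (f : 'I_m.+1 -> 'I_n.+1) : Hom (nerve_ob n) (nerve_ob m) :=
  proj1_sig (@nerve_tuple_edges m _ _ (fun z => nerve_arr n (f z))
                                  (fun z => gs_nerve_arr n (f z))).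

Lemma nerve_edge_map m n (f : 'I_m.+1 -> 'I_n.+1) (j k : 'I_m.+1) :
  nerve_edge m j k ⊙ nerve_map f = nerve_edge n (f j) (f k).
Proof. by rewrite /nerve_map; case: nerve_tuple_edges. Qed.

Lemma nerve_arr_map m n (f : 'I_m.+1 -> 'I_n.+1) (j : 'I_m.+1) :
  nerve_arr m j ⊙ nerve_map f = nerve_edge n (f ord0) (f j).
Proof. by rewrite -(nerve_edge0 m j) (nerve_edge_map f ord0 j). Qed.

Lemma nerve_map_id n : nerve_map (@id 'I_n.+1) = idm (nerve_ob n).
Proof. by apply: nerve_hom_ext => j k; rewrite nerve_edge_map comp_idr. Qed.

Lemma nerve_map_comp (k m n : nat) (f : 'I_k.+1 -> 'I_m.+1) (g : 'I_m.+1 -> 'I_n.+1) :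
  nerve_map (g \o f) = nerve_map f ⊙ nerve_map g.
Proof. by apply: nerve_hom_ext => j l; rewrite comp_assoc !nerve_edge_map. Qed.

Definition Nerve : OS C := @MkOS C nerve_ob (fun m n f => nerve_map f) nerve_map_id nerve_map_comp.

Lemma nerve_map0 n (f : 'I_1 -> 'I_n.+1) : nerve_map f = t ⊙ nerve_arr n (f ord0).
Proof.
rewrite -[nerve_map f]comp_idl.
have -> : idm (nerve_ob 0) = s ⊙ nerve_arr 0 (ord0 : 'I_1) by rewrite /= (proj1 (proj1 hG)).
by rewrite -comp_assoc nerve_arr_map gs_nerve_edge.
Qed.

End Nerve.

(** * Multiplicativity of the nerve *)

Section Pushouts.
Variables (m l n : nat) (a : 'I_1 -> 'I_m.+1) (b : 'I_1 -> 'I_l.+1).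
Variables (f : 'I_m.+1 -> 'I_n.+1) (g : 'I_l.+1 -> 'I_n.+1).
Hypothesis H : is_pushout_D a b f g.

(* Vertices of a pushout are separated by maps into [0,1]. *)
Definition ind2 (c : bool) : 'I_2 := if c then ord_max else ord0.

Lemma ind2_inj : injective ind2.
Proof. by case; case => // /(congr1 val). Qed.

Lemma pushout_injl : injective f.
Proof.
move=> i i' E; case: H => _ U.
have [w [[h1 _] _]] := U 1 (fun x => ind2 (x == i)) (fun _ => ind2 (a ord0 == i))
  (fun y => ltac:(by rewrite /= [y]ord1E)).
have := h1 i; have := h1 i'; rewrite /= E => -> /ind2_inj.
by rewrite eqxx => /eqP.
Qed.

Lemma pushout_injr : injective g.
Proof.
move=> j j' E; case: H => _ U.
have [w [[_ h2] _]] := U 1 (fun _ => ind2 (b ord0 == j)) (fun x => ind2 (x == j))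
  (fun y => ltac:(by rewrite /= [y]ord1E)).
have := h2 j; have := h2 j'; rewrite /= E => -> /ind2_inj.
by rewrite eqxx => /eqP.
Qed.

Lemma pushout_meet i j : f i = g j -> i = a ord0 /\ j = b ord0.
Proof.
move=> E; case: H => _ U; split.
  have [w [[h1 h2] _]] := U 1 (fun x => ind2 (x == i)) (fun _ => ind2 (a ord0 == i))
    (fun y => ltac:(by rewrite /= [y]ord1E)).
  have := h2 j; have := h1 i; rewrite /= E => -> /ind2_inj.
  by rewrite eqxx => /esym/eqP ->.
have [w [[h1 h2] _]] := U 1 (fun _ => ind2 (b ord0 == j)) (fun x => ind2 (x == j))
  (fun y => ltac:(by rewrite /= [y]ord1E)).
have := h1 i; have := h2 j; rewrite /= -E => -> /ind2_inj.
by rewrite eqxx => /esym/eqP ->.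
Qed.

Lemma pushout_cover z : (exists i, f i = z) \/ (exists j, g j = z).
Proof.
apply: NNPP => nz; case: H => _ U.
have nf i : f i != z by apply/eqP => E; apply: nz; left; exists i.
have ng j : g j != z by apply/eqP => E; apply: nz; right; exists j.
have [w [_ Uw]] := U 1 (fun _ => ord0) (fun _ => ord0) (fun _ => erefl).
have U0 := Uw (fun _ => ord0) (fun _ => erefl) (fun _ => erefl) z.
have U1 := Uw (fun x => ind2 (x == z)) (fun i => ltac:(by rewrite /= (negbTE (nf i))))
  (fun j => ltac:(by rewrite /= (negbTE (ng j)))) z.
by move: U1; rewrite /= eqxx -U0.
Qed.

End Pushouts.

Section NerveMultiplicative.
Variables (C : FinLimCategory) (G : GrpdData C) (hG : is_groupoid G).
Variables (m l n : nat) (a : 'I_1 -> 'I_m.+1) (b : 'I_1 -> 'I_l.+1).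
Variables (f : 'I_m.+1 -> 'I_n.+1) (g : 'I_l.+1 -> 'I_n.+1).
Hypothesis H : is_pushout_D a b f g.

Local Notation Q := (pb (nerve_map hG a) (nerve_map hG b)).
Local Notation p1 := (pb1 (nerve_map hG a) (nerve_map hG b)).
Local Notation p2 := (pb2 (nerve_map hG a) (nerve_map hG b)).

(* The arrow from the gluing vertex to the vertex [z] of [0,n], read in
   whichever of the two pieces contains [z]. *)
Definition glued_arr (z : 'I_n.+1) : Hom Q (gP G) :=
  if [pick i | f i == z] is Some i then nerve_edge G m (a ord0) i ⊙ p1
  else nerve_edge G l (b ord0) (odflt (b ord0) [pick j | g j == z]) ⊙ p2.

Lemma gt_nerve_glue : gt G ⊙ (nerve_arr G m (a ord0) ⊙ p1) = gt G ⊙ (nerve_arr G l (b ord0) ⊙ p2).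
Proof. by rewrite !comp_assoc -!(nerve_map0 hG) pb_comm. Qed.

Lemma gs_glued_arr z : gs G ⊙ glued_arr z = gt G ⊙ (nerve_arr G m (a ord0) ⊙ p1).
Proof.
rewrite /glued_arr; case: pickP => [i _|_]; rewrite comp_assoc (gs_nerve_edge hG) -comp_assoc //.
by rewrite gt_nerve_glue.
Qed.

Lemma glued_arr_f i : glued_arr (f i) = nerve_edge G m (a ord0) i ⊙ p1.
Proof.
rewrite /glued_arr; case: pickP => [i' /eqP E|]; first by rewrite (pushout_injl H E).
by move/(_ i); rewrite eqxx.
Qed.

Lemma glued_arr_g j : glued_arr (g j) = nerve_edge G l (b ord0) j ⊙ p2.
Proof.
rewrite /glued_arr; case: pickP => [i /eqP E|_].
  have [-> ->] := pushout_meet H E.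
  by rewrite /nerve_edge !(gdivxx hG) -!comp_assoc gt_nerve_glue.
case: pickP => [j' /eqP E|]; first by rewrite (pushout_injr H E).
by move/(_ j); rewrite eqxx.
Qed.

Lemma nerve_pushout_iso (e : nerve_map hG a ⊙ nerve_map hG f = nerve_map hG b ⊙ nerve_map hG g) :
  is_iso (pb_pair e).
Proof.
have [w hw] := nerve_tuple_edges hG gs_glued_arr.
have glued_pair z : glued_arr z ⊙ pb_pair e = nerve_edge G n (f (a ord0)) z.
  case: (pushout_cover H z) => [[i <-]|[j <-]].
    by rewrite glued_arr_f -comp_assoc pb_pair1 (nerve_edge_map hG).
  by rewrite glued_arr_g -comp_assoc pb_pair2 (nerve_edge_map hG); have /= -> := proj1 H ord0.
exists w; split.
  apply: (nerve_hom_ext hG) => z z'.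
  rewrite comp_assoc hw (gdiv_comp hG); last by rewrite !gs_glued_arr.
  by rewrite !glued_pair -(comp_idr (nerve_edge _ _ _ z)) -(comp_idr (nerve_edge _ _ _ z'))
    (gdiv_nerve_edge hG) comp_idr.
apply: pb_uniq; rewrite comp_assoc ?pb_pair1 ?pb_pair2 comp_idr; apply: (nerve_hom_ext hG) => j k.
- by rewrite comp_assoc (nerve_edge_map hG) hw !glued_arr_f (gdiv_nerve_edge hG).
- by rewrite comp_assoc (nerve_edge_map hG) hw !glued_arr_g (gdiv_nerve_edge hG).
Qed.

End NerveMultiplicative.

Lemma nerve_mult (C : FinLimCategory) (G : GrpdData C) (hG : is_groupoid G) :
  multiplicative (Nerve hG).
Proof. by move=> m l n a b f g H; apply: nerve_pushout_iso. Qed.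

Lemma nerve_strict (C : FinLimCategory) (G : GrpdData C) (hG : is_groupoid G) :
  gs G = gt G -> strictly_multiplicative (Nerve hG).
Proof.
move=> st; split; first exact: nerve_mult.
rewrite /= !(nerve_map0 hG) /s_map /t_map /= (gt_ge hG) -st -pb_comm.
by rewrite /nerve_base /= comp_idl.
Qed.

Section NerveFunctor.
Variables (C : FinLimCategory) (G G' : GrpdData C).
Hypotheses (hG : is_groupoid G) (hG' : is_groupoid G').
Variables (fP : Hom (gP G) (gP G')) (fS : Hom (gS G) (gS G')).
Hypothesis hf : is_gd_hom fP fS.

Lemma gd_hom_gmul (W : C) (x y : Hom W (gP G)) :
  gt G ⊙ x = gs G ⊙ y -> fP ⊙ gmul x y = gmul (fP ⊙ x) (fP ⊙ y).
Proof.
case: hf => hs [ht [_ [_ hm]]] hxy.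
have h : gt G' ⊙ (fP ⊙ pb1 (gt G) (gs G)) = gs G' ⊙ (fP ⊙ pb2 (gt G) (gs G)).
  by rewrite !comp_assoc ht hs -!comp_assoc pb_comm.
rewrite (gmulE hxy) comp_assoc -hm -comp_assoc gmu_gmul !comp_assoc.
by rewrite !pb_pair1 !pb_pair2 -!comp_assoc !pb_pair1 !pb_pair2.
Qed.

Lemma gs_hom_nerve_arr n j : gs G' ⊙ (fP ⊙ nerve_arr G n j) = fS ⊙ nerve_base G n.
Proof. by case: hf => hs _; rewrite comp_assoc hs -comp_assoc (gs_nerve_arr hG). Qed.

Definition nerve_hom n : Hom (nerve_ob G n) (nerve_ob G' n) :=
  nerve_tuple n (gs_hom_nerve_arr n).

Lemma nerve_arr_hom n (j : 'I_n.+1) : nerve_arr G' n j ⊙ nerve_hom n = fP ⊙ nerve_arr G n j.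
Proof.
case: (posnP j) => j0.
  rewrite j0 !nerve_arr0 -comp_assoc /nerve_hom nerve_base_tuple comp_assoc.
  by case: hf => _ [_ [-> _]]; rewrite -comp_assoc.
by rewrite /nerve_hom nerve_arr_tuple // j0 -ltnS ltn_ord.
Qed.

Lemma nerve_edge_hom n (j k : 'I_n.+1) :
  nerve_edge G' n j k ⊙ nerve_hom n = fP ⊙ nerve_edge G n j k.
Proof.
rewrite (nerve_edge_comp hG') !nerve_arr_hom /nerve_edge /gdiv gd_hom_gmul.
  by case: hf => _ [_ [_ [hi _]]]; rewrite !comp_assoc hi.
exact: (gdiv_composable hG (gs_nerve_arrs hG n j k)).
Qed.

Lemma nerve_hom0 : nerve_hom 0 = fS.
Proof.
transitivity (nerve_base G' 0 ⊙ nerve_hom 0); first by rewrite /nerve_base /= comp_idl.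
by rewrite /nerve_hom nerve_base_tuple /nerve_base /= comp_idr.
Qed.

Lemma nerve_hom_nat (m n : nat) (f : 'I_m.+1 -> 'I_n.+1) :
  nerve_hom m ⊙ nerve_map hG f = nerve_map hG' f ⊙ nerve_hom n.
Proof.
apply: (nerve_hom_ext hG') => j k.
by rewrite !comp_assoc nerve_edge_hom -comp_assoc (nerve_edge_map hG) (nerve_edge_map hG')
  nerve_edge_hom.
Qed.

End NerveFunctor.

Definition nerve_nt (C : FinLimCategory) (G G' : GrpdData C) (hG : is_groupoid G)
  (hG' : is_groupoid G') (u : GDHom G G') : NT (Nerve hG) (Nerve hG') :=
  @MkNT C (Nerve hG) (Nerve hG') _ (nerve_hom_nat hG hG' (hprop u)).

Lemma nerve_nt_id (C : FinLimCategory) (G : GrpdData C) (hG : is_groupoid G) :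
  nerve_nt hG hG (MkGDH (gd_hom_id G)) = MkNT (@nt_id_nat C (Nerve hG)).
Proof.
apply: nt_eq => n /=; apply: (nerve_hom_ext hG) => j k.
by rewrite (nerve_edge_hom hG hG) comp_idl comp_idr.
Qed.

Lemma nerve_nt_comp (C : FinLimCategory) (G1 G2 G3 : GrpdData C) (h1 : is_groupoid G1)
  (h2 : is_groupoid G2) (h3 : is_groupoid G3) (v : GDHom G2 G3) (u : GDHom G1 G2) :
  nerve_nt h1 h3 (MkGDH (gd_hom_comp v u))
  = MkNT (nt_comp_nat (nerve_nt h2 h3 v) (nerve_nt h1 h2 u)).
Proof.
apply: nt_eq => n /=; apply: (nerve_hom_ext h3) => j k.
by rewrite (nerve_edge_hom h1 h3) comp_assoc (nerve_edge_hom h2 h3) -!comp_assoc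
  (nerve_edge_hom h1 h2).
Qed.

(** * The comparison isomorphisms *)

Lemma gd_hom_of_nt (C : FinLimCategory) (P Q : OS C) (hP : multiplicative P)
  (hQ : multiplicative Q) (a : NT P Q) :
  is_gd_hom (G := constr hP) (G' := constr hQ) (a 1) (a 0).
Proof.
do 4 (split; first by rewrite /= nt_nat).
move=> h; apply: (iso_epi (os_phi_iso hP)).
have E : pb_pair h ⊙ os_phi P = os_phi Q ⊙ a 2.
  apply: pb_uniq; rewrite !comp_assoc ?pb_pair1 ?pb_pair2 /os_phi ?pb_pair1 ?pb_pair2.
  - by rewrite -!comp_assoc pb_pair1 nt_nat.
  - by rewrite -!comp_assoc pb_pair2 nt_nat.
rewrite !constr_muE -!comp_assoc E (comp_eqA (os_phi_invL hQ)) comp_idl.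
by rewrite (os_phi_invL hP) comp_idr nt_nat.
Qed.

Section Alpha.
Variables (C : FinLimCategory) (P : OS C) (hP : multiplicative P).

Local Notation G := (constr hP).
Local Notation hG := (constr_groupoid hP).

Definition const0 (n : nat) : 'I_1 -> 'I_n.+1 := fun _ => ord0.

Lemma gs_alpha_edge n j :
  gs G ⊙ os_map P (edge ord0 (inord j : 'I_n.+1)) = os_map P (const0 n).
Proof. exact: os_map_compE. Qed.

(* P_n -> N_n (constr P) records the edges (0,j) of a simplex. *)
Definition alpha n : Hom (P n) (nerve_ob G n) := nerve_tuple n (gs_alpha_edge n).

Lemma nerve_base_alpha n : nerve_base G n ⊙ alpha n = os_map P (const0 n).
Proof. exact: nerve_base_tuple. Qed.

Lemma nerve_arr_alpha n (j : 'I_n.+1) : nerve_arr G n j ⊙ alpha n = os_map P (edge ord0 j).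
Proof.
case: (posnP j) => j0.
  rewrite j0 nerve_arr0 -comp_assoc nerve_base_alpha /=; apply: os_map_compE => x.
  by apply: val_inj; rewrite /edge /=; case: ifP => //= _; rewrite j0.
rewrite /alpha nerve_arr_tuple; last by rewrite j0 -ltnS ltn_ord.
by apply: os_map_ext => x; rewrite /edge inord_val.
Qed.

Lemma constr_gmul_edges n (a b c : 'I_n.+1) :
  gmul (G := G) (os_map P (edge a b)) (os_map P (edge b c)) = os_map P (edge a c).
Proof. by rewrite (gmulE (G := G) (edge_square P a b c)) (@constr_mu_edges _ _ hP _ a b c) ?pb_pair1 ?pb_pair2. Qed.

Lemma nerve_edge_alpha n (j k : 'I_n.+1) :
  nerve_edge G n j k ⊙ alpha n = os_map P (edge j k).
Proof.
rewrite (nerve_edge_comp hG) !nerve_arr_alpha /gdiv.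
have -> : gi G ⊙ os_map P (edge ord0 j) = os_map P (edge j ord0).
  by apply: os_map_compE; case=> [[|[|?]] ?].
exact: constr_gmul_edges.
Qed.

Lemma alpha_nat (m n : nat) (f : 'I_m.+1 -> 'I_n.+1) :
  alpha m ⊙ os_map P f = os_map (Nerve hG) f ⊙ alpha n.
Proof.
apply: (nerve_hom_ext hG) => j k /=.
rewrite comp_assoc nerve_edge_alpha comp_assoc (nerve_edge_map hG) nerve_edge_alpha.
by apply: os_map_compE => x; rewrite /edge /=; case: ifP.
Qed.

Lemma alphaS_pullback n :
  nerve_base G n ⊙ (alpha n ⊙ pb1 (os_map P (glue_a (ord0 : 'I_n.+1))) (os_map P s_map))
  = gs G ⊙ pb2 (os_map P (glue_a (ord0 : 'I_n.+1))) (os_map P s_map).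
Proof. by rewrite comp_assoc nerve_base_alpha pb_comm. Qed.

(* Under P_{n+1} = P_n x_{P_0} P_1, alpha_{n+1} is alpha_n x id. *)
Lemma alphaS n :
  alpha n.+1 = (pb_pair (alphaS_pullback n) : Hom _ (nerve_ob G n.+1))
               ⊙ pb_pair (os_square P (proj1 (glue_pushout (ord0 : 'I_n.+1)))).
Proof.
set M := pb_pair _.
apply: nerve_hom_ext_arr.
  rewrite nerve_base_alpha; change (nerve_base G n.+1) with
    (nerve_base G n ⊙ pb1 (nerve_base G n) (gs G)).
  rewrite -!comp_assoc (comp_eqA (pb_pair1 _)) -!comp_assoc (comp_eqA (nerve_base_alpha n)).
  by rewrite /M pb_pair1; symmetry; apply: os_map_compE => x; apply: val_inj.
move=> j /andP [j0 jn].
rewrite /alpha nerve_arr_tuple; last by rewrite j0 jn.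
rewrite /=; case: eqP => [Ej|Ej].
  rewrite comp_assoc pb_pair2 /M pb_pair2; apply: os_map_ext => x.
  by rewrite /glue_g /edge Ej; apply: val_inj; case: ifP => //= _; rewrite inordK.
have jn' : j <= n by rewrite -ltnS ltn_neqAle jn andbT; apply/eqP.
have ha : nerve_arr G n j ⊙ alpha n = os_map P (edge ord0 (inord j)).
  by rewrite /alpha nerve_arr_tuple // j0.
rewrite -!comp_assoc (comp_eqA (pb_pair1 _)) -!comp_assoc (comp_eqA ha) /M pb_pair1 -os_comp.
apply: os_map_ext => x; apply: val_inj; rewrite /edge /=; case: ifP => //= _.
by rewrite !inordK // ltnS // ltnW.
Qed.

Lemma alpha_iso n : is_iso (alpha n).
Proof.
elim: n => [|n IH].
  have -> : alpha 0 = idm _.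
    have := nerve_base_alpha 0; rewrite /nerve_base /= comp_idl => ->.
    by apply: os_map_idE => x; rewrite [x]ord1E [const0 _ _]ord1E.
  exact: is_iso_idm.
rewrite alphaS; apply: is_iso_comp; first exact: hP.
exact: pb_pair_iso (nerve_base_alpha n).
Qed.

End Alpha.

Section Beta.
Variables (C : FinLimCategory) (G : GrpdData C) (hG : is_groupoid G).

Local Notation hN := (nerve_mult hG).
Local Notation N1 := (constr hN).

Lemma beta_mu (h : gt G ⊙ (nerve_arr G 1 1 ⊙ pb1 (gt N1) (gs N1))
                   = gs G ⊙ (nerve_arr G 1 1 ⊙ pb2 (gt N1) (gs N1))) :
  gmu G ⊙ pb_pair h = nerve_arr G 1 1 ⊙ gmu N1.
Proof.
apply: (iso_epi (os_phi_iso hN)).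
rewrite constr_muE -!comp_assoc os_phi_invL comp_idr.
rewrite gmu_gmul !comp_assoc pb_pair1 pb_pair2 -!comp_assoc pb1_os_phi pb2_os_phi /=.
rewrite !(nerve_arr_map hG _ ord_max).
rewrite /nerve_edge (gmul_gdiv hG) ?(gs_nerve_arrs hG _ _ 0) //.
by rewrite /d_map /= !inordK.
Qed.

(* N_1 G -> G: the single factor of N_1 = S x_S P. *)
Lemma beta_hom : is_gd_hom (G := N1) (G' := G) (nerve_arr G 1 1) (idm (gS G)).
Proof.
split; first by rewrite comp_idl /= (nerve_map0 hG) /= (gt_ge hG) -pb_comm /nerve_base /= comp_idl.
split; first by rewrite comp_idl /= (nerve_map0 hG).
split.
  rewrite comp_idr /= (nerve_arr_map hG e_map ord_max) /nerve_edge (gdivxx hG) /=.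
  by rewrite (proj1 (proj2 (proj1 hG))) comp_idr.
split.
  rewrite /= (nerve_arr_map hG i_map ord_max) /nerve_edge /gdiv /=.
  have -> : pb1 (nerve_base G 0) (gs G) = gt G ⊙ (gi G ⊙ pb2 (nerve_base G 0) (gs G)).
    by rewrite (gt_gi hG) -pb_comm /nerve_base /= comp_idl.
  by rewrite (gmulx1 hG).
exact: beta_mu.
Qed.

Lemma beta_iso : is_iso (nerve_arr G 1 1).
Proof.
have ev : nerve_base G 0 ⊙ gs G = gs G ⊙ idm (gP G) by rewrite /nerve_base /= comp_idl comp_idr.
exists (pb_pair ev : Hom (gP G) (nerve_ob G 1)); split; last by rewrite /= pb_pair2.
apply: pb_uniq; rewrite /= comp_idr comp_assoc ?pb_pair1 ?pb_pair2 ?comp_idl //.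
by rewrite -pb_comm /nerve_base /= comp_idl.
Qed.

End Beta.

Lemma gd_hom_inv (C : FinLimCategory) (G G' : GrpdData C) (fP : Hom (gP G) (gP G'))
  (fS : Hom (gS G) (gS G')) (g : Hom (gP G') (gP G)) (k : Hom (gS G') (gS G)) :
  is_gd_hom fP fS -> g ⊙ fP = idm _ -> fP ⊙ g = idm _ -> k ⊙ fS = idm _ -> fS ⊙ k = idm _ ->
  is_gd_hom g k.
Proof.
move=> [hs [ht [he [hi hm]]]] g1 g2 k1 k2.
split; first exact: inv_square g2 k1 hs.
split; first exact: inv_square g2 k1 ht.
split; first exact: inv_square k2 g1 he.
split; first exact: inv_square g2 g1 hi.
move=> h; apply: (@iso_mono _ _ _ _ fP); first by exists g.
have h' : gt G' ⊙ (fP ⊙ pb1 (gt G) (gs G)) = gs G' ⊙ (fP ⊙ pb2 (gt G) (gs G)).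
  by rewrite !comp_assoc ht hs -!comp_assoc pb_comm.
rewrite comp_assoc -(hm h') (comp_assoc fP g) g2 comp_idl -comp_assoc.
have -> : pb_pair h' ⊙ pb_pair h = idm _.
  apply: pb_uniq; rewrite comp_idr comp_assoc ?pb_pair1 ?pb_pair2 -comp_assoc.
  - by rewrite pb_pair1 comp_assoc g2 comp_idl.
  - by rewrite pb_pair2 comp_assoc g2 comp_idl.
by rewrite comp_idr.
Qed.

Lemma gd_iso (C : FinLimCategory) (p : GDCat C -> Prop) (G G' : FullSub p) (u : Hom G G') :
  is_iso (hP u) -> is_iso (hS u) -> is_iso u.
Proof.
move=> [g [g1 g2]] [k [k1 k2]].
have hv := gd_hom_inv (hprop u) g1 g2 k1 k2.
by exists (MkGDH hv : Hom G' G); split; apply: gdh_eq.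
Qed.

Lemma nt_iso (C : FinLimCategory) (P Q : OS C) (a : NT P Q) :
  (forall n, is_iso (a n)) -> is_iso (C := OSCat C) a.
Proof.
move=> H.
have nat' (m n : nat) (f : 'I_m.+1 -> 'I_n.+1) :
    iso_inv (H m) ⊙ os_map Q f = os_map P f ⊙ iso_inv (H n).
  by symmetry; apply: inv_square (iso_invR (H n)) (iso_invL (H m)) _; exact: esym (nt_nat a f).
exists (MkNT nat'); split; apply: nt_eq => n /=; [exact: iso_invL | exact: iso_invR].
Qed.

(* [hG] is whatever groupoid proof the functors carry, not necessarily
   [constr_groupoid hP]; proof irrelevance transports [alpha_nat] (likewise in
   [beta_hom_any]). *)
Definition alpha_nt (C : FinLimCategory) (P : OS C) (hP : multiplicative P)
  (hG : is_groupoid (constr hP)) : NT P (Nerve hG).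
Proof.
refine (@MkNT C P (Nerve hG) (alpha hP) _).
by rewrite (proof_irrelevance _ hG (constr_groupoid hP)); exact: alpha_nat.
Defined.

Lemma alpha_natural (C : FinLimCategory) (P Q : OS C) (hP : multiplicative P)
  (hQ : multiplicative Q) (hGP : is_groupoid (constr hP)) (a : NT P Q) (ha : is_gd_hom (G := constr hP) (G' := constr hQ) (a 1) (a 0)) n :
  alpha hQ n ⊙ a n = nerve_hom hGP ha n ⊙ alpha hP n.
Proof.
have hGQ := constr_groupoid hQ.
apply: (nerve_hom_ext hGQ) => j k.
rewrite comp_assoc nerve_edge_alpha comp_assoc (nerve_edge_hom hGP hGQ) -comp_assoc.
by rewrite nerve_edge_alpha nt_nat.
Qed.

Lemma beta_hom_any (C : FinLimCategory) (G : GrpdData C) (hG : is_groupoid G)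
  (hN : multiplicative (Nerve hG)) :
  is_gd_hom (G := constr hN) (G' := G) (nerve_arr G 1 1) (idm (gS G)).
Proof. rewrite (proof_irrelevance _ hN (nerve_mult hG)); exact: beta_hom. Qed.

Lemma beta_natural (C : FinLimCategory) (G G' : GrpdData C) (hG : is_groupoid G)
  (fP : Hom (gP G) (gP G')) fS (hf : is_gd_hom fP fS) :
  nerve_arr G' 1 1 ⊙ nerve_hom hG hf 1 = fP ⊙ nerve_arr G 1 1.
Proof. exact: (nerve_arr_hom hG hf (ord_max : 'I_2)). Qed.

Definition Psi (C : FinLimCategory) : Functor (Groupoids C) (MultOS C).
Proof.
refine (@MkFun (Groupoids C) (MultOS C)
  (fun X => exist _ (Nerve (proj2_sig X)) (nerve_mult (proj2_sig X)) : MultOS C)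
  (fun X Y u => nerve_nt (proj2_sig X) (proj2_sig Y) u) _ _).
- by move=> X; exact: nerve_nt_id.
- by move=> X Y Z g f; exact: nerve_nt_comp.
Defined.

Definition PsiStrict (C : FinLimCategory) : Functor (Groups C) (StrictMultOS C).
Proof.
refine (@MkFun (Groups C) (StrictMultOS C)
  (fun X => exist _ (Nerve (proj1 (proj2_sig X)))
     (nerve_strict (proj1 (proj2_sig X)) (proj2 (proj2_sig X))) : StrictMultOS C)
  (fun X Y u => nerve_nt (proj1 (proj2_sig X)) (proj1 (proj2_sig Y)) u) _ _).
- by move=> X; exact: nerve_nt_id.
- by move=> X Y Z g f; exact: nerve_nt_comp.
Defined.

Definition constrM_groupoid (C : FinLimCategory) (P : MultOS C) : is_groupoid (constrM P) :=
  constr_groupoid (proj2_sig P).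

Definition constrM_hom (C : FinLimCategory) (P Q : MultOS C) (a : Hom P Q) :
  is_gd_hom (G := constrM P) (G' := constrM Q) (nt a 1) (nt a 0) :=
  gd_hom_of_nt (proj2_sig P) (proj2_sig Q) a.

Lemma Phi_equivalence (C : FinLimCategory) :
  is_equivalence (Phi (@constrM_groupoid C) (@constrM_hom C)).
Proof.
exists (Psi C); split.
- exists (fun X : MultOS C => alpha_nt (constrM_groupoid X)); split.
    by move=> X Y f; apply: nt_eq => n /=; apply: alpha_natural.
  by move=> X; apply: nt_iso => n; exact: alpha_iso.
- exists (fun X : Groupoids C => MkGDH (beta_hom (proj2_sig X))); split.
    move=> X Y u; apply: gdh_eq => /=; first exact: beta_natural.
    by rewrite nerve_hom0 comp_idl comp_idr.
  by move=> X; apply: gd_iso => /=; [exact: beta_iso | exact: is_iso_idm].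
Qed.

Lemma PhiStrict_equivalence (C : FinLimCategory) :
  is_equivalence (PhiStrict (@constrM_groupoid C) (@constrM_hom C)).
Proof.
exists (PsiStrict C); split.
- exists (fun X : StrictMultOS C =>
            alpha_nt (proj1 (constr_group (@constrM_groupoid C) X))); split.
    by move=> X Y f; apply: nt_eq => n /=; apply: alpha_natural.
  by move=> X; apply: nt_iso => n; exact: alpha_iso.
- exists (fun X : Groups C => MkGDH (beta_hom_any
            (proj1 (nerve_strict (proj1 (proj2_sig X)) (proj2 (proj2_sig X)))))); split.
    move=> X Y u; apply: gdh_eq => /=; first exact: beta_natural.
    by rewrite nerve_hom0 comp_idl comp_idr.
  by move=> X; apply: gd_iso => /=; [exact: beta_iso | exact: is_iso_idm].
Qed.

Theorem mainTheorem2 (C : FinLimCategory) :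
  (forall (P : OS C) (hP : multiplicative P), is_groupoid (constr hP)) /\
  exists (hG : forall P : MultOS C, is_groupoid (constrM P))
         (hH : forall (P Q : MultOS C) (a : Hom P Q),
             is_gd_hom (G := constrM P) (G' := constrM Q) (nt a 1) (nt a 0)),
    is_equivalence (Phi hG hH) /\ is_equivalence (PhiStrict hG hH).
Proof.
split; first exact: constr_groupoid.
exists (@constrM_groupoid C), (@constrM_hom C).
split; [exact: Phi_equivalence | exact: PhiStrict_equivalence].
Qed.
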